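(* For every $f\in\mathcal{F}_3$ and every $\mathbf{x}\in[0,1]^3$, $$f^{++}(\mathbf{x})=h(\mathbf{x})+\max_{\omega\in\{\underline\omega,\overline\omega\}}(g_2-g_1)\,\omega,$$ where, letting $x_{i^\star}\le x_{j^\star}\le x_{k^\star}$ denote the coordinates of $\mathbf{x}$ in nondecreasing order ($\{i^\star,j^\star,k^\star\}=\{1,2,3\}$), $\underline\omega=\max\big[(1-x_{k^\star})(1-x_{i^\star}-x_{j^\star}),\,0\big]$, $\overline\omega=\min\big[\prod_{i=1}^3x_i+\prod_{i=1}^3(1-x_i),\,(1-x_{j^\star})(1-x_{k^\star})\big]$, $g_1=1+f(1)+f(2)+f(3)$, $g_2=f(1,2)+f(1,3)+f(2,3)$, and $h(\mathbf{x})=\sum_{i=1}^3x_if(i)-\sum_{1\le i<j\le3}x_ix_j\big[f(i)+f(j)-f(i,j)\big]-(g_2-g_1)\big[\prod_{i=1}^3x_i+\prod_{i=1}^3(1-x_i)\big]$.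
   Context: $[n]=\{1,\dots,n\}$. A set function $f:2^{[n]}\to\mathbb{R}_+$ is monotone if $f(S)\le f(T)$ for $S\subseteq T$, submodular if $f(S)+f(T)\ge f(S\cap T)+f(S\cup T)$. $\mathcal{F}_n$ is the set of monotone submodular $f:2^{[n]}\to\mathbb{R}_+$ with $f(\emptyset)=0$, $f([n])=1$. Write $f(i)=f(\{i\})$, $f(i,j)=f(\{i,j\})$. For $\mathbf{x}\in[0,1]^n$, the upper pairwise independent extension is $f^{++}(\mathbf{x})=\max\sum_{S\subseteq[n]}\theta(S)f(S)$ over $\theta:2^{[n]}\to\mathbb{R}_{\ge0}$ with $\sum_S\theta(S)=1$, $\sum_{S\ni i}\theta(S)=x_i$ for all $i$, and $\sum_{S\ni i,j}\theta(S)=x_ix_j$ for all $i<j$. *)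

From mathcomp Require Import all_boot all_order all_algebra.
From mathcomp Require Import all_classical all_reals.
Set Implicit Arguments. Unset Strict Implicit. Unset Printing Implicit Defensive.
Import Order.TTheory GRing.Theory Num.Theory.
Local Open Scope ring_scope.
Local Open Scope classical_set_scope.

Section Defs.
Variable R : realType.

Definition in_Fn (n : nat) (f : {set 'I_n} -> R) : Prop :=
  [/\ (forall S, 0 <= f S),
      (forall S T : {set 'I_n}, S \subset T -> f S <= f T),
      (forall S T : {set 'I_n}, f (S :&: T) + f (S :|: T) <= f S + f T),
      f finset.set0 = 0 & f (finset.setTfor 'I_n) = 1].

Definition pw_feasible (n : nat) (x : 'I_n -> R) (theta : {set 'I_n} -> R) : Prop :=
  [/\ (forall S, 0 <= theta S),
      \sum_(S : {set 'I_n}) theta S = 1,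
      (forall i, \sum_(S : {set 'I_n} | i \in S) theta S = x i) &
      (forall i j : 'I_n, (i < j)%N ->
         \sum_(S : {set 'I_n} | (i \in S) && (j \in S)) theta S = x i * x j)].

Definition fpp (n : nat) (f : {set 'I_n} -> R) (x : 'I_n -> R) : R :=
  sup [set v : R | exists theta, pw_feasible x theta /\
                                 v = \sum_(S : {set 'I_n}) theta S * f S].
End Defs.

(* Once the mass w = theta(emptyset) is fixed, the marginal and pairwise
   constraints determine theta:  theta{i} = (1 - x_j)(1 - x_k) - w,
   theta{i,j} = x_i x_j - P + w  and  theta([3]) = P - w,  where
   P = prod x_i + prod (1 - x_i).  Nonnegativity of the eight atoms confines w
   to a segment; for sorted coordinates the binding lower bound comes from the
   two smallest coordinates and the binding upper bound from the two largest,
   which gives [w_lo, w_hi].  As f(emptyset) = 0 and f([3]) = 1, the objective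
   is h(x) + (g2 - g1) w, affine in w, so its supremum is attained at an
   endpoint. *)

From mathcomp Require Import all_boot all_order all_algebra.
From mathcomp Require Import all_classical all_reals.
From mathcomp Require Import perm ring lra.
Import Order.TTheory GRing.Theory Num.Theory.
Local Open Scope ring_scope.

Lemma ord3P (i : 'I_3) : [\/ i = 0, i = 1 | i = 2].
Proof.
by case: i => [[|[|[|//]]] ?]; [constructor 1 | constructor 2 | constructor 3];
  apply: val_inj.
Qed.

Lemma big_ord3 (T : Type) (idx : T) (op : Monoid.law idx) (F : 'I_3 -> T) :
  \big[op/idx]_(i < 3) F i = op (op (F 0) (F 1)) (F 2).
Proof.
rewrite !big_ord_recl big_ord0 Monoid.mulm1 Monoid.mulmA.
by congr (op (op (F _) (F _)) (F _)); apply: val_inj.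
Qed.

Lemma big_ord3_lt (T : Type) (idx : T) (op : Monoid.law idx)
    (F : 'I_3 -> 'I_3 -> T) :
  \big[op/idx]_(i < 3) \big[op/idx]_(j < 3 | (i < j)%N) F i j
  = op (op (F 0 1) (F 0 2)) (F 1 2).
Proof.
under eq_bigr => i _ do rewrite big_mkcond big_ord3.
by rewrite big_ord3 /= !Monoid.mul1m !Monoid.mulm1.
Qed.

Lemma eq_set_ord3 (A B : {set 'I_3}) :
  (A == B) = [&& (0 \in A) == (0 \in B), (1 \in A) == (1 \in B)
                & (2 \in A) == (2 \in B)].
Proof.
apply/eqP/and3P => [->|[/eqP E0 /eqP E1 /eqP E2]]; first by rewrite !eqxx.
by apply/setP => i; case: (ord3P i) => ->.
Qed.

Lemma set_ord3_ind (P : {set 'I_3} -> Prop) :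
  P finset.set0 -> P [set 0] -> P [set 1] -> P [set 2] ->
  P [set 0; 1] -> P [set 0; 2] -> P [set 1; 2] -> P [set: 'I_3] ->
  forall S, P S.
Proof.
move=> P0 P1 P2 P3 P01 P02 P12 PT S.
case E0 : (0 \in S); case E1 : (1 \in S); case E2 : (2 \in S);
  [ apply: (eq_rect _ P PT) | apply: (eq_rect _ P P01)
  | apply: (eq_rect _ P P02) | apply: (eq_rect _ P P1)
  | apply: (eq_rect _ P P12) | apply: (eq_rect _ P P2)
  | apply: (eq_rect _ P P3) | apply: (eq_rect _ P P0) ];
  by apply/eqP; rewrite eq_set_ord3 !inE E0 E1 E2.
Qed.

Lemma big_set_ord3 (T : Type) (idx : T) (op : Monoid.com_law idx)
    (F : {set 'I_3} -> T) :
  \big[op/idx]_(S : {set 'I_3}) F S =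
  op (op (op (op (op (op (op (F finset.set0) (F [set 0])) (F [set 1]))
    (F [set 2])) (F [set 0; 1])) (F [set 0; 2])) (F [set 1; 2]))
    (F [set: 'I_3]).
Proof.
rewrite (bigD1 finset.set0) // (bigD1 [set 0]) /=; last first.
  by rewrite eq_set_ord3 !inE.
rewrite (bigD1 [set 1]) /=; last by rewrite !eq_set_ord3 !inE.
rewrite (bigD1 [set 2]) /=; last by rewrite !eq_set_ord3 !inE.
rewrite (bigD1 [set 0; 1]) /=; last by rewrite !eq_set_ord3 !inE.
rewrite (bigD1 [set 0; 2]) /=; last by rewrite !eq_set_ord3 !inE.
rewrite (bigD1 [set 1; 2]) /=; last by rewrite !eq_set_ord3 !inE.
rewrite (bigD1 [set: 'I_3]) /=; last by rewrite !eq_set_ord3 !inE.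
rewrite big_pred0 => [|S]; last first.
  rewrite !eq_set_ord3 !inE.
  by case: (0 \in S); case: (1 \in S); case: (2 \in S).
by rewrite Monoid.mulm1 !Monoid.mulmA.
Qed.

Lemma big_set_ord3_cond (T : Type) (idx : T) (op : Monoid.com_law idx)
    (P : pred {set 'I_3}) (F : {set 'I_3} -> T) :
  \big[op/idx]_(S | P S) F S =
  op (op (op (op (op (op (op
    (if P finset.set0 then F finset.set0 else idx)
    (if P [set 0] then F [set 0] else idx))
    (if P [set 1] then F [set 1] else idx))
    (if P [set 2] then F [set 2] else idx))
    (if P [set 0; 1] then F [set 0; 1] else idx))
    (if P [set 0; 2] then F [set 0; 2] else idx))
    (if P [set 1; 2] then F [set 1; 2] else idx))
    (if P [set: 'I_3] then F [set: 'I_3] else idx).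
Proof. by rewrite big_mkcond big_set_ord3. Qed.

Definition corner_mass {R : comNzRingType} {n} (x : 'I_n -> R) : R :=
  \prod_(i < n) x i + \prod_(i < n) (1 - x i).

Lemma corner_mass_perm (R : comNzRingType) n (x : 'I_n -> R) (s : {perm 'I_n}) :
  corner_mass (x \o s) = corner_mass x.
Proof.
rewrite /corner_mass.
by congr (_ + _); rewrite [RHS](reindex_inj (@perm_inj _ s)).
Qed.

Lemma corner_mass_sub (R : comNzRingType) (y : 'I_3 -> R) :
  corner_mass y - y 0 * y 1 = (1 - y 2) * (1 - y 0 - y 1).
Proof. by rewrite /corner_mass !big_ord3 /=; ring. Qed.

Section OmegaRange.
Context {R : realType}.

Definition omega_admissible (y : 'I_3 -> R) (w : R) : Prop :=
  0 <= w <= corner_mass y /\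
  forall i j : 'I_3, i != j ->
    corner_mass y - y i * y j <= w <= (1 - y i) * (1 - y j).

Lemma omega_admissible_perm (s : {perm 'I_3}) (y : 'I_3 -> R) (w : R) :
  omega_admissible (y \o s) w <-> omega_admissible y w.
Proof.
rewrite /omega_admissible corner_mass_perm.
split=> -[w_range pair]; split=> // i j ij.
  have := pair (s^-1 i)%g (s^-1 j)%g; rewrite /= !permKV; apply.
  by rewrite (inj_eq perm_inj).
by apply: pair; rewrite (inj_eq perm_inj).
Qed.

Section Sorted.
Variables (y : 'I_3 -> R) (w : R).

Lemma sorted3_pair_products (i j : 'I_3) :
  (forall k, 0 <= y k <= 1) -> y 0 <= y 1 -> y 1 <= y 2 -> i != j ->
  y 0 * y 1 <= y i * y j /\ (1 - y 1) * (1 - y 2) <= (1 - y i) * (1 - y j).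
Proof.
move=> y_01 le01 le12; move: (y_01 0) (y_01 1) (y_01 2).
move=> /andP[a0 a1] /andP[b0 b1] /andP[c0 c1].
by case: (ord3P i) => ->; case: (ord3P j) => -> // _; split; nra.
Qed.

Lemma omega_admissible_sorted :
  (forall k, 0 <= y k <= 1) -> y 0 <= y 1 -> y 1 <= y 2 ->
  omega_admissible y w <->
  Num.max ((1 - y 2) * (1 - y 0 - y 1)) 0 <= w
    <= Num.min (corner_mass y) ((1 - y 1) * (1 - y 2)).
Proof.
move=> y_01 le01 le12; rewrite ge_max le_min -corner_mass_sub.
split=> [[/andP[w0 wP] pair] | /andP[/andP[lo w0] /andP[wP hi]]].
  have /andP[lo _] := pair 0 1 isT; have /andP[_ hi] := pair 1 2 isT.
  by rewrite lo w0 wP hi.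
split=> [|i j /(sorted3_pair_products _ _ y_01 le01 le12)[lo_ij hi_ij]].
  by rewrite w0.
by apply/andP; split; lra.
Qed.

Lemma omega_sorted_lo_le_hi :
  (forall k, 0 <= y k <= 1) -> y 0 <= y 1 -> y 1 <= y 2 ->
  Num.max ((1 - y 2) * (1 - y 0 - y 1)) 0
    <= Num.min (corner_mass y) ((1 - y 1) * (1 - y 2)).
Proof.
move=> y_01 le01 le12; move: (y_01 0) (y_01 1) (y_01 2).
move=> /andP[a0 a1] /andP[b0 b1] /andP[c0 c1].
have P0 : 0 <= corner_mass y.
  by rewrite /corner_mass !big_ord3 /= addr_ge0 ?mulr_ge0 ?subr_ge0.
rewrite ge_max !le_min P0 !mulr_ge0 ?subr_ge0 // andbT -corner_mass_sub.
by rewrite gerBl ?mulr_ge0 //= corner_mass_sub; nra.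
Qed.

End Sorted.
End OmegaRange.

Section Parametrization.
Context {R : realType} (x : 'I_3 -> R).

Definition theta3 (w : R) (S : {set 'I_3}) : R :=
  match 0 \in S, 1 \in S, 2 \in S with
  | false, false, false => w
  | true, false, false => (1 - x 1) * (1 - x 2) - w
  | false, true, false => (1 - x 0) * (1 - x 2) - w
  | false, false, true => (1 - x 0) * (1 - x 1) - w
  | true, true, false => x 0 * x 1 - corner_mass x + w
  | true, false, true => x 0 * x 2 - corner_mass x + w
  | false, true, true => x 1 * x 2 - corner_mass x + w
  | true, true, true => corner_mass x - w
  end.

Lemma theta3_ge0 (w : R) : (forall S, 0 <= theta3 w S) <-> omega_admissible x w.
Proof.
split=> [th_ge0 | [/andP[w0 wP] pair] S].
  move: (th_ge0 finset.set0) (th_ge0 [set 0]) (th_ge0 [set 1]) (th_ge0 [set 2]).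
  move: (th_ge0 [set 0; 1]) (th_ge0 [set 0; 2]) (th_ge0 [set 1; 2]).
  move: (th_ge0 [set: 'I_3]); rewrite /theta3 !inE /= => *.
  split=> [|i j]; first by apply/andP; split; lra.
  by case: (ord3P i) => ->; case: (ord3P j) => -> // _; apply/andP; split; lra.
move: (pair 0 1 isT) (pair 0 2 isT) (pair 1 2 isT).
move=> /andP[lo01 hi01] /andP[lo02 hi02] /andP[lo12 hi12].
by elim/set_ord3_ind: S; rewrite /theta3 !inE /=; lra.
Qed.

Lemma pw_feasible_theta3 (w : R) :
  pw_feasible x (theta3 w) <-> forall S, 0 <= theta3 w S.
Proof.
split=> [[] // | th_ge0]; split=> // [|i|i j].
- by rewrite big_set_ord3 /theta3 !inE /= /corner_mass !big_ord3 /=; ring.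
- by rewrite big_set_ord3_cond /theta3; case: (ord3P i) => ->;
    rewrite !inE /= /corner_mass !big_ord3 /=; ring.
- by rewrite big_set_ord3_cond /theta3;
    case: (ord3P i) => ->; case: (ord3P j) => -> // _;
    rewrite !inE /= /corner_mass !big_ord3 /=; ring.
Qed.

Lemma pw_feasible3E (th : {set 'I_3} -> R) :
  pw_feasible x th -> th =1 theta3 (th finset.set0).
Proof.
case=> _ sum1 marg pair.
move: (marg 0) (marg 1) (marg 2) (pair 0 1 isT) (pair 0 2 isT) (pair 1 2 isT).
rewrite !big_set_ord3_cond !inE /= => m0 m1 m2 p01 p02 p12.
rewrite big_set_ord3 /= in sum1.
by elim/set_ord3_ind; rewrite /theta3 !inE /= /corner_mass ?big_ord3 /=; lra.
Qed.

End Parametrization.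

Section Objective.
Context {R : realType}.

Definition ext_g1 (f : {set 'I_3} -> R) : R := 1 + \sum_(i < 3) f [set i].

Definition ext_g2 (f : {set 'I_3} -> R) : R :=
  \sum_(i < 3) \sum_(j < 3 | (i < j)%N) f [set i; j].

Definition ext_h (f : {set 'I_3} -> R) (x : 'I_3 -> R) : R :=
  \sum_(i < 3) x i * f [set i]
  - \sum_(i < 3) \sum_(j < 3 | (i < j)%N)
      x i * x j * (f [set i] + f [set j] - f [set i; j])
  - (ext_g2 f - ext_g1 f) * corner_mass x.

Lemma theta3_objective (f : {set 'I_3} -> R) (x : 'I_3 -> R) (w : R) :
  f finset.set0 = 0 -> f [set: 'I_3] = 1 ->
  \sum_(S : {set 'I_3}) theta3 x w S * f S
  = ext_h f x + (ext_g2 f - ext_g1 f) * w.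
Proof.
move=> f0 fT; rewrite big_set_ord3 /theta3 !inE /= f0 fT.
rewrite /ext_h /ext_g1 /ext_g2 /corner_mass !big_ord3_lt !big_ord3 /=; ring.
Qed.

End Objective.

Section SupSegment.
Context {R : realType}.
Local Open Scope classical_set_scope.

Lemma sup_attained (E : set R) (m : R) : E m -> ubound E m -> sup E = m.
Proof.
move=> Em ubm; apply/le_anti/andP; split.
  exact: (ge_sup (ex_intro _ m Em)).
exact: (ub_le_sup (ex_intro _ m ubm)).
Qed.

Lemma sup_affine_segment (a c lo hi : R) : lo <= hi ->
  sup [set a + c * w | w in [set w | lo <= w <= hi]]
  = a + Num.max (c * lo) (c * hi).
Proof.
move=> lo_hi; apply: sup_attained.
  by case: lerP => _; [exists hi | exists lo] => //=; rewrite lo_hi lexx.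
move=> _ [w /andP[lo_w w_hi] <-]; rewrite lerD2l le_max.
by have [c0|c0] := lerP 0 c; apply/orP; [right | left]; nra.
Qed.

End SupSegment.

Lemma fpp3E (R : realType) (f : {set 'I_3} -> R) (x : 'I_3 -> R) :
  f finset.set0 = 0 -> f [set: 'I_3] = 1 ->
  fpp f x = sup [set ext_h f x + (ext_g2 f - ext_g1 f) * w
                 | w in omega_admissible x]%classic.
Proof.
move=> f0 fT; rewrite /fpp; congr sup; apply/seteqP; split=> v.
  move=> [th [feas ->]]; have /funext Eth := pw_feasible3E _ _ feas.
  rewrite Eth in feas *; exists (th finset.set0).
    by rewrite -theta3_ge0 -pw_feasible_theta3.
  by rewrite theta3_objective.
move=> [w ok <-]; exists (theta3 x w); split.
  by rewrite pw_feasible_theta3 theta3_ge0.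
by rewrite theta3_objective.
Qed.

Theorem mainTheorem6 (R : realType) (f : {set 'I_3} -> R) (x : 'I_3 -> R)
  (s : {perm 'I_3}) :
  in_Fn f ->
  (forall i, 0 <= x i <= 1) ->
  x (s ord0) <= x (s 1) -> x (s 1) <= x (s 2) ->
  let xi := x (s ord0) in let xj := x (s 1) in let xk := x (s 2) in
  let P := \prod_(i < 3) x i + \prod_(i < 3) (1 - x i) in
  let wlo := Num.max ((1 - xk) * (1 - xi - xj)) 0 in
  let whi := Num.min P ((1 - xj) * (1 - xk)) in
  let g1 := 1 + \sum_(i < 3) f [set i] in
  let g2 := \sum_(i < 3) \sum_(j < 3 | (i < j)%N) f [set i; j] in
  let h := \sum_(i < 3) x i * f [set i]
           - \sum_(i < 3) \sum_(j < 3 | (i < j)%N)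
               x i * x j * (f [set i] + f [set j] - f [set i; j])
           - (g2 - g1) * P in
  fpp f x = h + Num.max ((g2 - g1) * wlo) ((g2 - g1) * whi).
Proof.
rewrite (_ : ord0 = 0); last exact: val_inj.
move=> [_ _ _ f0 fT] x01 le01 le12 xi xj xk P wlo whi g1 g2 h.
have y01 k : 0 <= (x \o s) k <= 1 := x01 (s k).
have lo_le_hi : wlo <= whi.
  by have := omega_sorted_lo_le_hi _ y01 le01 le12; rewrite corner_mass_perm.
have omega_itv : omega_admissible x = [set w | wlo <= w <= whi]%classic.
  apply/funext => w; apply/propext.
  rewrite -(omega_admissible_perm s).
  by rewrite (omega_admissible_sorted _ _ y01 le01 le12) corner_mass_perm.
by rewrite fpp3E // omega_itv sup_affine_segment.
Qed.
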